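(* Let $\mathcal A$ be a finite alphabet and let $\Psi$ be a symmetry on $\mathcal A^*$. Then $|\Psi(w)|=|w|$ for every $w\in\mathcal A^*$.
   Context: A symmetry on $\mathcal A^*$ is a map $\Psi:\mathcal A^*\to\mathcal A^*$ such that (1) $\Psi$ is a bijection and (2) for all $w,v\in\mathcal A^*$, the number of occurrences of $w$ in $v$ equals the number of occurrences of $\Psi(w)$ in $\Psi(v)$ (an occurrence of $w$ in $v=v_1\cdots v_m$ is an index $i$ such that $w$ is a prefix of $v_iv_{i+1}\cdots v_m$). $|w|$ denotes the length of $w$. *)

From mathcomp Require Import all_boot.
Set Implicit Arguments. Unset Strict Implicit. Unset Printing Implicit Defensive.

(* Words over alphabet A are sequences [seq A]; positions of v are 0 .. size v - 1
   (0-based version of the paper's 1 .. m). *)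

Definition occ (A : eqType) (w v : seq A) : nat :=
  count (fun i => prefix w (drop i v)) (iota 0 (size v)).

Definition symmetry (A : eqType) (Psi : seq A -> seq A) : Prop :=
  bijective Psi /\ forall w v : seq A, occ w v = occ (Psi w) (Psi v).

From mathcomp Require Import all_boot.

Set Implicit Arguments.
Unset Strict Implicit.

(* The empty word occurs once at every position of v, so occ [::] v = |v|.
   A symmetry fixes the empty word (its preimage has no occurrences in [::],
   hence Psi [::] has no positions), and therefore
   |Psi w| = occ [::] (Psi w) = occ (Psi [::]) (Psi w) = occ [::] w = |w|. *)

Lemma occ_nil_l (A : eqType) (v : seq A) : occ [::] v = size v.
Proof.
rewrite /occ (@eq_count _ _ predT) ?count_predT ?size_iota //.
by move=> i; case: (drop i v).
Qed.

Lemma occ_nil_r (A : eqType) (w : seq A) : occ w [::] = 0.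
Proof. by []. Qed.

Lemma symmetry_nil (A : eqType) (Psi : seq A -> seq A) :
  symmetry Psi -> Psi [::] = [::].
Proof.
move=> [[Phi PhiK PsiK] occ_Psi]; apply/eqP.
by rewrite -size_eq0 -occ_nil_l -{1}(PsiK [::]) -occ_Psi occ_nil_r.
Qed.

Lemma symmetry_size (A : eqType) (Psi : seq A -> seq A) :
  symmetry Psi -> forall w : seq A, size (Psi w) = size w.
Proof.
move=> symPsi w; have [_ occ_Psi] := symPsi.
by rewrite -!occ_nil_l -{1}(symmetry_nil symPsi) -occ_Psi.
Qed.

Theorem lemma14 (A : finType) (Psi : seq A -> seq A) :
  symmetry Psi -> forall w : seq A, size (Psi w) = size w.
Proof. exact: symmetry_size. Qed.
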